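(* Let $(X,Y,\eta,\mu,\psi,\epsilon,\delta,\phi)$ be a left Frobenius pair in a monoidal category $(\mathfrak{C},\otimes,\mathbbm{1})$, and set $\alpha=\phi\circ\eta\colon\mathbbm{1}\to Y\otimes X$ and $\beta=\epsilon\circ\psi\colon X\otimes Y\to\mathbbm{1}$. Then \[ (\beta\otimes X)\circ(X\otimes\alpha)=\mathrm{id}_X \quad\text{and}\quad (Y\otimes\beta)\circ(\alpha\otimes Y)=\mathrm{id}_Y, \] so $X$ is left dualizable with dual $Y$. Consequently, for all objects $U,V$ of $\mathfrak{C}$ there are bijections, natural in $U$ and $V$, \[ \lambda\colon \operatorname{Hom}_{\mathfrak{C}}(X\otimes U,V)\to\operatorname{Hom}_{\mathfrak{C}}(U,Y\otimes V),\quad \lambda(f)=(Y\otimes f)\circ(\phi\eta\otimes U), \] with inverse $g\mapsto(\epsilon\psi\otimes V)\circ(X\otimes g)$, and \[ \rho\colon \operatorname{Hom}_{\mathfrak{C}}(U\otimes Y,V)\to\operatorname{Hom}_{\mathfrak{C}}(U,V\otimes X),\quad \rho(f)=(f\otimes X)\circ(U\otimes\phi\eta), \] with inverse $g\mapsto(V\otimes\epsilon\psi)\circ(g\otimes Y)$.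
   Context: Throughout, $(\mathfrak{C},\otimes,\mathbbm{1})$ is a monoidal category; associativity and unit isomorphisms are suppressed (identifying $\mathbbm{1}\otimes A=A=A\otimes\mathbbm{1}$). A \emph{left Frobenius pair} in $\mathfrak{C}$ consists of objects $X,Y$ and morphisms $\epsilon\colon Y\to\mathbbm{1}$, $\eta\colon\mathbbm{1}\to X$, $\delta\colon Y\to Y\otimes Y$, $\mu\colon X\otimes X\to X$, $\phi\colon X\to Y\otimes X$, $\psi\colon X\otimes Y\to Y$ such that: (1a) $(X,\eta,\mu)$ is an associative unital monoid: $\mu(\mu\otimes X)=\mu(X\otimes\mu)$, $\mu(\eta\otimes X)=\mathrm{id}_X=\mu(X\otimes\eta)$; (1b) $(Y,\epsilon,\delta)$ is a coassociative counital comonoid: $(\delta\otimes Y)\delta=(Y\otimes\delta)\delta$, $(\epsilon\otimes Y)\delta=\mathrm{id}_Y=(Y\otimes\epsilon)\delta$; (2a) $\psi$ is a left $X$-module structure on $Y$: $\psi(\mu\otimes Y)=\psi(X\otimes\psi)$, $\psi(\eta\otimes Y)=\mathrm{id}_Y$; (2b) $\phi$ is a left $Y$-comodule structure on $X$: $(\delta\otimes X)\phi=(Y\otimes\phi)\phi$, $(\epsilon\otimes X)\phi=\mathrm{id}_X$; (3a) $\phi$ is a left $X$-module map: $\phi\circ\mu=(\psi\otimes X)\circ(X\otimes\phi)$; (3b) $\psi$ is a left $Y$-comodule map: $\delta\circ\psi=(Y\otimes\psi)\circ(\phi\otimes Y)$. *)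

Set Implicit Arguments.
Unset Strict Implicit.

(** A (not necessarily strict) monoidal category, with explicit associator
    and unitors.  Hom-sets are types, equality of morphisms is Leibniz. *)
Record MonCat : Type := {
  Ob :> Type;
  Hom : Ob -> Ob -> Type;
  comp : forall A B C, Hom B C -> Hom A B -> Hom A C;
  idm : forall A, Hom A A;
  comp_assoc : forall A B C D (h : Hom C D) (g : Hom B C) (f : Hom A B),
    comp h (comp g f) = comp (comp h g) f;
  comp_id_l : forall A B (f : Hom A B), comp (idm B) f = f;
  comp_id_r : forall A B (f : Hom A B), comp f (idm A) = f;

  tens : Ob -> Ob -> Ob;
  tensm : forall A A' B B', Hom A A' -> Hom B B' -> Hom (tens A B) (tens A' B');
  tens_id : forall A B, tensm (idm A) (idm B) = idm (tens A B);
  tens_comp : forall A A' A'' B B' B''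
      (f : Hom A' A'') (g : Hom A A') (h : Hom B' B'') (k : Hom B B'),
    tensm (comp f g) (comp h k) = comp (tensm f h) (tensm g k);

  unit : Ob;

  assoc : forall A B C, Hom (tens (tens A B) C) (tens A (tens B C));
  assoc_inv : forall A B C, Hom (tens A (tens B C)) (tens (tens A B) C);
  assoc_iso1 : forall A B C, comp (assoc_inv A B C) (assoc A B C) = idm _;
  assoc_iso2 : forall A B C, comp (assoc A B C) (assoc_inv A B C) = idm _;
  assoc_nat : forall A A' B B' C C' (f : Hom A A') (g : Hom B B') (h : Hom C C'),
    comp (assoc A' B' C') (tensm (tensm f g) h)
    = comp (tensm f (tensm g h)) (assoc A B C);

  lunit : forall A, Hom (tens unit A) A;
  lunit_inv : forall A, Hom A (tens unit A);
  lunit_iso1 : forall A, comp (lunit_inv A) (lunit A) = idm _;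
  lunit_iso2 : forall A, comp (lunit A) (lunit_inv A) = idm _;
  lunit_nat : forall A B (f : Hom A B),
    comp (lunit B) (tensm (idm unit) f) = comp f (lunit A);

  runit : forall A, Hom (tens A unit) A;
  runit_inv : forall A, Hom A (tens A unit);
  runit_iso1 : forall A, comp (runit_inv A) (runit A) = idm _;
  runit_iso2 : forall A, comp (runit A) (runit_inv A) = idm _;
  runit_nat : forall A B (f : Hom A B),
    comp (runit B) (tensm f (idm unit)) = comp f (runit A);

  pentagon : forall A B C D,
    comp (assoc A B (tens C D)) (assoc (tens A B) C D)
    = comp (tensm (idm A) (assoc B C D))
        (comp (assoc A (tens B C) D) (tensm (assoc A B C) (idm D)));
  triangle : forall A B,
    comp (tensm (idm A) (lunit B)) (assoc A unit B)
    = tensm (runit A) (idm B)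
}.

Arguments Hom {m} _ _.
Arguments comp {m A B C} _ _.
Arguments idm {m} A.
Arguments tens {m} _ _.
Arguments tensm {m A A' B B'} _ _.
Arguments unit {m}.
Arguments assoc {m} A B C.
Arguments assoc_inv {m} A B C.
Arguments lunit {m} A.
Arguments lunit_inv {m} A.
Arguments runit {m} A.
Arguments runit_inv {m} A.

Declare Scope moncat_scope.
Delimit Scope moncat_scope with MC.
Notation "g ∘ f" := (comp g f) (at level 40, left associativity) : moncat_scope.
Notation "A ⊗ B" := (tens A B) (at level 35, right associativity) : moncat_scope.
Notation "f ⊠ g" := (tensm f g) (at level 35, right associativity) : moncat_scope.
Open Scope moncat_scope.

(** Left Frobenius pair (X, Y, eta, mu, psi, eps, delta, phi); the suppressed
    associativity/unit isomorphisms of the paper are inserted explicitly. *)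
Record LeftFrobeniusPair (C : MonCat) (X Y : C)
    (eps : Hom Y unit) (eta : Hom unit X) (delta : Hom Y (Y ⊗ Y))
    (mu : Hom (X ⊗ X) X) (phi : Hom X (Y ⊗ X)) (psi : Hom (X ⊗ Y) Y) : Prop := {
  lfp_mu_assoc : mu ∘ (mu ⊠ idm X) = mu ∘ (idm X ⊠ mu) ∘ assoc X X X;
  lfp_mu_unit_l : mu ∘ (eta ⊠ idm X) = lunit X;
  lfp_mu_unit_r : mu ∘ (idm X ⊠ eta) = runit X;
  lfp_delta_coassoc : assoc Y Y Y ∘ (delta ⊠ idm Y) ∘ delta = (idm Y ⊠ delta) ∘ delta;
  lfp_delta_counit_l : (eps ⊠ idm Y) ∘ delta = lunit_inv Y;
  lfp_delta_counit_r : (idm Y ⊠ eps) ∘ delta = runit_inv Y;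
  lfp_psi_assoc : psi ∘ (mu ⊠ idm Y) = psi ∘ (idm X ⊠ psi) ∘ assoc X X Y;
  lfp_psi_unit : psi ∘ (eta ⊠ idm Y) = lunit Y;
  lfp_phi_coassoc : assoc Y Y X ∘ (delta ⊠ idm X) ∘ phi = (idm Y ⊠ phi) ∘ phi;
  lfp_phi_counit : (eps ⊠ idm X) ∘ phi = lunit_inv X;
  lfp_phi_linear : phi ∘ mu = (psi ⊠ idm X) ∘ assoc_inv X Y X ∘ (idm X ⊠ phi);
  lfp_psi_colinear : delta ∘ psi = (idm Y ⊠ psi) ∘ assoc Y X Y ∘ (phi ⊠ idm Y)
}.

Definition lam_map (C : MonCat) (X Y U V : C) (alpha : Hom unit (Y ⊗ X))
    (f : Hom (X ⊗ U) V) : Hom U (Y ⊗ V) :=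
  (idm Y ⊠ f) ∘ assoc Y X U ∘ (alpha ⊠ idm U) ∘ lunit_inv U.

Definition lam_inv (C : MonCat) (X Y U V : C) (beta : Hom (X ⊗ Y) unit)
    (g : Hom U (Y ⊗ V)) : Hom (X ⊗ U) V :=
  lunit V ∘ (beta ⊠ idm V) ∘ assoc_inv X Y V ∘ (idm X ⊠ g).

Definition rho_map (C : MonCat) (X Y U V : C) (alpha : Hom unit (Y ⊗ X))
    (f : Hom (U ⊗ Y) V) : Hom U (V ⊗ X) :=
  (f ⊠ idm X) ∘ assoc_inv U Y X ∘ (idm U ⊠ alpha) ∘ runit_inv U.

Definition rho_inv (C : MonCat) (X Y U V : C) (beta : Hom (X ⊗ Y) unit)
    (g : Hom U (V ⊗ X)) : Hom (U ⊗ Y) V :=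
  runit V ∘ (idm V ⊠ beta) ∘ assoc V X Y ∘ (g ⊠ idm Y).


(** The proof has two independent halves.
    - Frobenius half: the zig-zag identities for (alpha, beta) follow from the
      module-map axiom (3a) resp. comodule-map axiom (3b) together with the
      unit/counit axioms, e.g. (beta ⊗ X)(X ⊗ alpha) = (eps ⊗ X) phi mu (X ⊗ eta)
      = (eps ⊗ X) phi = id.
    - Duality half: for ANY alpha, beta satisfying the zig-zag identities the
      maps lambda and rho are mutually inverse with the stated inverses, and
      they are natural in U and V (naturality needs no hypothesis at all). *)

Ltac reassoc :=
  repeat rewrite <- comp_assoc; rewrite ?tens_id, ?comp_id_l, ?comp_id_r.

(** Re-bracket the right-nested chain [L] so that it occurs as a left-nested
    subterm, ready to be rewritten. *)
Ltac group_chain L :=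
  lazymatch L with
  | ?x ∘ ?r => group_chain r; try rewrite (comp_assoc x r)
  | _ => idtac
  end.

(** Rewrite the goal with the equation [H] whose left-hand side may occur
    anywhere inside a composite, regardless of bracketing. *)
Ltac rw_chain H :=
  let H' := fresh in
  pose proof H as H'; repeat rewrite <- comp_assoc in H'; rewrite ?tens_id in H';
  reassoc;
  match type of H' with ?L = _ => group_chain L end;
  rewrite H'; clear H'; reassoc.

Lemma precomp_eq {C : MonCat} {A B D E : C} {f : Hom A B} {g : Hom D A} {h : Hom D B}
  (H : f ∘ g = h) (k : Hom E D) : f ∘ (g ∘ k) = h ∘ k.
Proof. rewrite comp_assoc, H. reflexivity. Qed.

Lemma tens_comp_l {C : MonCat} (A : C) {B B' D : C} (f : Hom B' D) (g : Hom B B') :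
  (f ∘ g) ⊠ idm A = (f ⊠ idm A) ∘ (g ⊠ idm A).
Proof. rewrite <- tens_comp, comp_id_l. reflexivity. Qed.

Lemma tens_comp_r {C : MonCat} (A : C) {B B' D : C} (f : Hom B' D) (g : Hom B B') :
  idm A ⊠ (f ∘ g) = (idm A ⊠ f) ∘ (idm A ⊠ g).
Proof. rewrite <- tens_comp, comp_id_l. reflexivity. Qed.

Lemma tens_split_lr {C : MonCat} {A A' B B' : C} (f : Hom A A') (g : Hom B B') :
  (f ⊠ idm B') ∘ (idm A ⊠ g) = f ⊠ g.
Proof. rewrite <- tens_comp, comp_id_l, comp_id_r. reflexivity. Qed.

Lemma tens_split_rl {C : MonCat} {A A' B B' : C} (f : Hom A A') (g : Hom B B') :
  (idm A' ⊠ g) ∘ (f ⊠ idm B) = f ⊠ g.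
Proof. rewrite <- tens_comp, comp_id_l, comp_id_r. reflexivity. Qed.

Lemma tens_comp_l_chain {C : MonCat} (A : C) {B B' D E : C}
    (f : Hom B' D) (g : Hom B B') (k : Hom E (B ⊗ A)) :
  (f ⊠ idm A) ∘ ((g ⊠ idm A) ∘ k) = ((f ∘ g) ⊠ idm A) ∘ k.
Proof. rewrite tens_comp_l, comp_assoc. reflexivity. Qed.

Lemma tens_comp_r_chain {C : MonCat} (A : C) {B B' D E : C}
    (f : Hom B' D) (g : Hom B B') (k : Hom E (A ⊗ B)) :
  (idm A ⊠ f) ∘ ((idm A ⊠ g) ∘ k) = (idm A ⊠ (f ∘ g)) ∘ k.
Proof. rewrite tens_comp_r, comp_assoc. reflexivity. Qed.

(** Cancel adjacent structure isomorphisms against their inverses and merge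
    adjacent whiskerings, anywhere in a right-nested chain. *)
Ltac cancel_isos :=
  repeat progress (reassoc;
    rewrite ?assoc_iso1, ?assoc_iso2, ?lunit_iso1, ?lunit_iso2, ?runit_iso1, ?runit_iso2,
      ?(precomp_eq (assoc_iso1 _ _ _)), ?(precomp_eq (assoc_iso2 _ _ _)),
      ?(precomp_eq (lunit_iso1 _)), ?(precomp_eq (lunit_iso2 _)),
      ?(precomp_eq (runit_iso1 _)), ?(precomp_eq (runit_iso2 _)),
      <- ?tens_comp_l, <- ?tens_comp_r, ?tens_comp_l_chain, ?tens_comp_r_chain).

Lemma inverse_unique {C : MonCat} {A B : C} {f g : Hom A B} {f' g' : Hom B A} :
  f = g -> f' ∘ f = idm A -> g ∘ g' = idm B -> f' = g'.
Proof.
  intros E H1 H2. subst g.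
  rewrite <- (comp_id_r f'), <- H2, comp_assoc, H1, comp_id_l. reflexivity.
Qed.

Lemma assoc_inv_nat {C : MonCat} {A A' B B' D D' : C}
    (f : Hom A A') (g : Hom B B') (h : Hom D D') :
  assoc_inv A' B' D' ∘ (f ⊠ (g ⊠ h)) = ((f ⊠ g) ⊠ h) ∘ assoc_inv A B D.
Proof.
  rewrite <- (comp_id_r (assoc_inv A' B' D' ∘ _)), <- (assoc_iso2 A B D). reassoc.
  rw_chain (eq_sym (assoc_nat f g h)). rw_chain (assoc_iso1 A' B' D'). reflexivity.
Qed.

Lemma lunit_inv_nat {C : MonCat} {A B : C} (f : Hom A B) :
  (idm unit ⊠ f) ∘ lunit_inv A = lunit_inv B ∘ f.
Proof.
  rewrite <- (comp_id_l (_ ∘ lunit_inv A)), <- (lunit_iso1 B). reassoc.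
  rw_chain (lunit_nat f). rw_chain (lunit_iso2 A). reflexivity.
Qed.

Lemma runit_inv_nat {C : MonCat} {A B : C} (f : Hom A B) :
  (f ⊠ idm unit) ∘ runit_inv A = runit_inv B ∘ f.
Proof.
  rewrite <- (comp_id_l (_ ∘ runit_inv A)), <- (runit_iso1 B). reassoc.
  rw_chain (runit_nat f). rw_chain (runit_iso2 A). reflexivity.
Qed.

Lemma lunit_whisker_faithful {C : MonCat} (A B : C) (f g : Hom A B) :
  idm unit ⊠ f = idm unit ⊠ g -> f = g.
Proof.
  intro H.
  rewrite <- (comp_id_r f), <- (comp_id_r g), <- (lunit_iso2 A).
  rewrite !comp_assoc, <- !lunit_nat, H. reflexivity.
Qed.

Lemma runit_whisker_faithful {C : MonCat} (A B : C) (f g : Hom A B) :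
  f ⊠ idm unit = g ⊠ idm unit -> f = g.
Proof.
  intro H.
  rewrite <- (comp_id_r f), <- (comp_id_r g), <- (runit_iso2 A).
  rewrite !comp_assoc, <- !runit_nat, H. reflexivity.
Qed.

(** ** Kelly's coherence identities

    The left unitor of A ⊗ B is the left unitor of A tensored with B, and
    dually for the right unitor; both follow from the pentagon and triangle
    axioms after whiskering with the unit object. *)

Lemma kelly_lunit {C : MonCat} (A B : C) :
  lunit (A ⊗ B) ∘ assoc unit A B = lunit A ⊠ idm B.
Proof.
  apply lunit_whisker_faithful.
  assert (Hiso : (assoc unit (unit ⊗ A) B ∘ (assoc unit unit A ⊠ idm B)) ∘
                 ((assoc_inv unit unit A ⊠ idm B) ∘ assoc_inv unit (unit ⊗ A) B) = idm _)
    by (cancel_isos; reflexivity).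
  rewrite <- (comp_id_r (idm unit ⊠ (lunit (A ⊗ B) ∘ assoc unit A B))),
          <- (comp_id_r (idm unit ⊠ (lunit A ⊠ idm B))), <- Hiso, !comp_assoc.
  f_equal.
  rewrite tens_comp_r. reassoc.
  rw_chain (eq_sym (pentagon unit unit A B)).
  rw_chain (triangle unit (A ⊗ B)).
  rw_chain (eq_sym (assoc_nat (runit unit) (idm A) (idm B))).
  rw_chain (eq_sym (triangle unit A)).
  rw_chain (tens_comp_l B (idm unit ⊠ lunit A) (assoc unit unit A)).
  rw_chain (assoc_nat (idm unit) (lunit A) (idm B)).
  reflexivity.
Qed.

Lemma kelly_runit {C : MonCat} (A B : C) :
  (idm A ⊠ runit B) ∘ assoc A B unit = runit (A ⊗ B).
Proof.
  apply runit_whisker_faithful.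
  assert (assoc_mono : forall f g : Hom (((A ⊗ B) ⊗ unit) ⊗ unit) ((A ⊗ B) ⊗ unit),
     assoc A B unit ∘ f = assoc A B unit ∘ g -> f = g).
  { intros f g H.
    rewrite <- (comp_id_l f), <- (comp_id_l g), <- (assoc_iso1 A B unit),
            <- !comp_assoc, H.
    reflexivity. }
  symmetry. apply assoc_mono.
  rw_chain (eq_sym (triangle (A ⊗ B) unit)).
  rw_chain (assoc_nat (idm A) (idm B) (lunit unit)).
  rw_chain (pentagon A B unit unit).
  rw_chain (eq_sym (tens_comp_r A (idm B ⊠ lunit unit) (assoc B unit unit))).
  rw_chain (triangle B unit).
  rw_chain (eq_sym (assoc_nat (idm A) (runit B) (idm unit))).
  rw_chain (eq_sym (tens_comp_l unit (idm A ⊠ runit B) (assoc A B unit))).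
  reflexivity.
Qed.

Lemma kelly_lunit_inv {C : MonCat} (A B : C) :
  assoc_inv unit A B ∘ lunit_inv (A ⊗ B) = lunit_inv A ⊠ idm B.
Proof. apply (inverse_unique (kelly_lunit A B)); cancel_isos; reflexivity. Qed.

Lemma kelly_runit_inv {C : MonCat} (A B : C) :
  assoc_inv A B unit ∘ (idm A ⊠ runit_inv B) = runit_inv (A ⊗ B).
Proof. apply (inverse_unique (kelly_runit A B)); cancel_isos; reflexivity. Qed.

Lemma triangle_inv {C : MonCat} (A B : C) :
  assoc_inv A unit B ∘ (idm A ⊠ lunit_inv B) = runit_inv A ⊠ idm B.
Proof. apply (inverse_unique (triangle A B)); cancel_isos; reflexivity. Qed.

Lemma triangle_runit_inv {C : MonCat} (A B : C) :
  assoc A unit B ∘ (runit_inv A ⊠ idm B) = idm A ⊠ lunit_inv B.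
Proof. rewrite <- triangle_inv. cancel_isos. reflexivity. Qed.

Lemma triangle_assoc_inv {C : MonCat} (A B : C) :
  (runit A ⊠ idm B) ∘ assoc_inv A unit B = idm A ⊠ lunit B.
Proof. rewrite <- triangle. cancel_isos. reflexivity. Qed.

Lemma pentagon_assoc_inv_l {C : MonCat} (A B D E : C) :
  assoc_inv A B (D ⊗ E) ∘ (idm A ⊠ assoc B D E)
  = assoc (A ⊗ B) D E ∘ (assoc_inv A B D ⊠ idm E) ∘ assoc_inv A (B ⊗ D) E.
Proof.
  assert (Hiso : (assoc A (B ⊗ D) E ∘ (assoc A B D ⊠ idm E)) ∘
      ((assoc_inv A B D ⊠ idm E) ∘ assoc_inv A (B ⊗ D) E) = idm _)
    by (cancel_isos; reflexivity).
  rewrite <- (comp_id_r (assoc_inv A B (D ⊗ E) ∘ _)), <- Hiso. reassoc.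
  rw_chain (eq_sym (pentagon A B D E)). cancel_isos. reflexivity.
Qed.

Lemma pentagon_assoc_inv_r {C : MonCat} (A B D E : C) :
  (idm A ⊠ assoc_inv B D E) ∘ assoc A B (D ⊗ E)
  = assoc A (B ⊗ D) E ∘ (assoc A B D ⊠ idm E) ∘ assoc_inv (A ⊗ B) D E.
Proof.
  rewrite <- (comp_id_r ((idm A ⊠ assoc_inv B D E) ∘ _)), <- (assoc_iso2 (A ⊗ B) D E).
  reassoc. rw_chain (pentagon A B D E). cancel_isos. reflexivity.
Qed.

Lemma pentagon_whisker_inv {C : MonCat} (A B D E : C) :
  assoc A B (D ⊗ E) ∘ assoc (A ⊗ B) D E ∘ (assoc_inv A B D ⊠ idm E)
  = (idm A ⊠ assoc B D E) ∘ assoc A (B ⊗ D) E.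
Proof. rw_chain (pentagon A B D E). cancel_isos. reflexivity. Qed.

Lemma pentagon_inv {C : MonCat} (A B D E : C) :
  (assoc A B D ⊠ idm E) ∘ assoc_inv (A ⊗ B) D E ∘ assoc_inv A B (D ⊗ E)
  = assoc_inv A (B ⊗ D) E ∘ (idm A ⊠ assoc_inv B D E).
Proof.
  assert (Hinv : assoc_inv (A ⊗ B) D E ∘ assoc_inv A B (D ⊗ E) =
     (assoc_inv A B D ⊠ idm E) ∘ (assoc_inv A (B ⊗ D) E ∘ (idm A ⊠ assoc_inv B D E))).
  { apply (inverse_unique (pentagon A B D E)); cancel_isos; reflexivity. }
  rw_chain Hinv. cancel_isos. reflexivity.
Qed.

(** ** Dual pairs and the hom-set bijections *)

Definition zigzag_X {C : MonCat} {X Y : C}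
    (alpha : Hom unit (Y ⊗ X)) (beta : Hom (X ⊗ Y) unit) : Prop :=
  lunit X ∘ (beta ⊠ idm X) ∘ assoc_inv X Y X ∘ (idm X ⊠ alpha) ∘ runit_inv X = idm X.

Definition zigzag_Y {C : MonCat} {X Y : C}
    (alpha : Hom unit (Y ⊗ X)) (beta : Hom (X ⊗ Y) unit) : Prop :=
  runit Y ∘ (idm Y ⊠ beta) ∘ assoc Y X Y ∘ (alpha ⊠ idm Y) ∘ lunit_inv Y = idm Y.

Section DualPair.

Context {C : MonCat} {X Y : C} (alpha : Hom unit (Y ⊗ X)) (beta : Hom (X ⊗ Y) unit).

Lemma lam_map_natural (U U' V V' : C) (u : Hom U' U) (v : Hom V V') (f : Hom (X ⊗ U) V) :
  lam_map alpha (v ∘ f ∘ (idm X ⊠ u)) = (idm Y ⊠ v) ∘ lam_map alpha f ∘ u.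
Proof.
  unfold lam_map. rewrite !tens_comp_r. reassoc.
  rw_chain (eq_sym (assoc_nat (idm Y) (idm X) u)).
  rw_chain (tens_split_rl alpha u). rw_chain (eq_sym (tens_split_lr alpha u)).
  rw_chain (lunit_inv_nat u). reflexivity.
Qed.

Lemma rho_map_natural (U U' V V' : C) (u : Hom U' U) (v : Hom V V') (f : Hom (U ⊗ Y) V) :
  rho_map alpha (v ∘ f ∘ (u ⊠ idm Y)) = (v ⊠ idm X) ∘ rho_map alpha f ∘ u.
Proof.
  unfold rho_map. rewrite !tens_comp_l. reassoc.
  rw_chain (eq_sym (assoc_inv_nat u (idm Y) (idm X))).
  rw_chain (tens_split_lr u alpha). rw_chain (eq_sym (tens_split_rl u alpha)).
  rw_chain (runit_inv_nat u). reflexivity.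
Qed.

Hypothesis zigX : zigzag_X alpha beta.
Hypothesis zigY : zigzag_Y alpha beta.

(** Each round trip slides [f] (resp. [g]) past the structure maps, and what
    is left is a whiskered zig-zag composite, which is the identity. *)
Lemma lam_inv_map (U V : C) (f : Hom (X ⊗ U) V) : lam_inv beta (lam_map alpha f) = f.
Proof.
  assert (zig_U := f_equal (fun h => h ⊠ idm U) zigX). simpl in zig_U.
  rewrite !tens_comp_l in zig_U.
  unfold lam_inv, lam_map. rewrite !tens_comp_r. reassoc.
  rw_chain (assoc_inv_nat (idm X) (idm Y) f).
  rw_chain (tens_split_lr beta f). rw_chain (eq_sym (tens_split_rl beta f)).
  rw_chain (lunit_nat f).
  rw_chain (pentagon_assoc_inv_l X Y X U).
  rw_chain (eq_sym (assoc_nat beta (idm X) (idm U))).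
  rw_chain (kelly_lunit X U).
  rw_chain (assoc_inv_nat (idm X) alpha (idm U)).
  rw_chain (triangle_inv X U).
  rw_chain zig_U. reflexivity.
Qed.

Lemma lam_map_inv (U V : C) (g : Hom U (Y ⊗ V)) : lam_map alpha (lam_inv beta g) = g.
Proof.
  assert (zag_V := f_equal (fun h => h ⊠ idm V) zigY). simpl in zag_V.
  rewrite !tens_comp_l in zag_V.
  unfold lam_inv, lam_map. rewrite !tens_comp_r. reassoc.
  rw_chain (eq_sym (assoc_nat (idm Y) (idm X) g)).
  rw_chain (tens_split_rl alpha g). rw_chain (eq_sym (tens_split_lr alpha g)).
  rw_chain (lunit_inv_nat g).
  rw_chain (pentagon_assoc_inv_r Y X Y V).
  rw_chain (eq_sym (assoc_nat (idm Y) beta (idm V))).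
  rw_chain (triangle Y V).
  rw_chain (assoc_inv_nat alpha (idm Y) (idm V)).
  rw_chain (kelly_lunit_inv Y V).
  rw_chain zag_V. reflexivity.
Qed.

Lemma rho_inv_map (U V : C) (f : Hom (U ⊗ Y) V) : rho_inv beta (rho_map alpha f) = f.
Proof.
  assert (zag_U := f_equal (fun h => idm U ⊠ h) zigY). simpl in zag_U.
  rewrite !tens_comp_r in zag_U.
  unfold rho_inv, rho_map. rewrite !tens_comp_l. reassoc.
  rw_chain (assoc_nat f (idm X) (idm Y)).
  rw_chain (tens_split_rl f beta). rw_chain (eq_sym (tens_split_lr f beta)).
  rw_chain (runit_nat f).
  rw_chain (eq_sym (kelly_runit U Y)).
  rw_chain (assoc_nat (idm U) (idm Y) beta).
  rw_chain (pentagon_whisker_inv U Y X Y).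
  rw_chain (assoc_nat (idm U) alpha (idm Y)).
  rw_chain (triangle_runit_inv U Y).
  rw_chain zag_U. reflexivity.
Qed.

Lemma rho_map_inv (U V : C) (g : Hom U (V ⊗ X)) : rho_map alpha (rho_inv beta g) = g.
Proof.
  assert (zig_V := f_equal (fun h => idm V ⊠ h) zigX). simpl in zig_V.
  rewrite !tens_comp_r in zig_V.
  unfold rho_inv, rho_map. rewrite !tens_comp_l. reassoc.
  rw_chain (eq_sym (assoc_inv_nat g (idm Y) (idm X))).
  rw_chain (tens_split_lr g alpha). rw_chain (eq_sym (tens_split_rl g alpha)).
  rw_chain (runit_inv_nat g).
  rw_chain (eq_sym (kelly_runit_inv V X)).
  rw_chain (eq_sym (assoc_inv_nat (idm V) (idm X) alpha)).
  rw_chain (pentagon_inv V X Y X).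
  rw_chain (eq_sym (assoc_inv_nat (idm V) beta (idm X))).
  rw_chain (triangle_assoc_inv V X).
  rw_chain zig_V. reflexivity.
Qed.

End DualPair.

(** ** The Frobenius half: zig-zag identities from the Frobenius axioms *)

Section FrobeniusZigzag.

Context {C : MonCat} {X Y : C}
    {eps : Hom Y unit} {eta : Hom unit X} {delta : Hom Y (Y ⊗ Y)}
    {mu : Hom (X ⊗ X) X} {phi : Hom X (Y ⊗ X)} {psi : Hom (X ⊗ Y) Y}.
Hypothesis F : LeftFrobeniusPair eps eta delta mu phi psi.

(** (beta ⊗ X)(X ⊗ alpha) = (eps ⊗ X)(psi ⊗ X)(X ⊗ phi)(X ⊗ eta)
    = (eps ⊗ X) phi mu (X ⊗ eta) = (eps ⊗ X) phi, by (3a) and the unit law;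
    this is the identity by the counit law of the comodule X. *)
Lemma frobenius_zigzag_X : zigzag_X (phi ∘ eta) (eps ∘ psi).
Proof.
  unfold zigzag_X. reassoc.
  rw_chain (tens_comp_l X eps psi). rw_chain (tens_comp_r X phi eta).
  rw_chain (eq_sym (lfp_phi_linear F)).
  rw_chain (lfp_mu_unit_r F).
  rw_chain (lfp_phi_counit F).
  cancel_isos. reflexivity.
Qed.

(** Dually, (Y ⊗ beta)(alpha ⊗ Y) = (Y ⊗ eps) delta psi (eta ⊗ Y) by (3b),
    which collapses by the unit law of the module Y and the counit law. *)
Lemma frobenius_zigzag_Y : zigzag_Y (phi ∘ eta) (eps ∘ psi).
Proof.
  unfold zigzag_Y. reassoc.
  rw_chain (tens_comp_r Y eps psi). rw_chain (tens_comp_l Y phi eta).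
  rw_chain (eq_sym (lfp_psi_colinear F)).
  rw_chain (lfp_psi_unit F).
  rw_chain (lfp_delta_counit_r F).
  cancel_isos. reflexivity.
Qed.

End FrobeniusZigzag.

Theorem mainTheorem2 (C : MonCat) (X Y : C)
    (eps : Hom Y unit) (eta : Hom unit X) (delta : Hom Y (Y ⊗ Y))
    (mu : Hom (X ⊗ X) X) (phi : Hom X (Y ⊗ X)) (psi : Hom (X ⊗ Y) Y) :
  LeftFrobeniusPair eps eta delta mu phi psi ->
  let alpha := phi ∘ eta in
  let beta := eps ∘ psi in
  lunit X ∘ (beta ⊠ idm X) ∘ assoc_inv X Y X ∘ (idm X ⊠ alpha) ∘ runit_inv X = idm X /\
  runit Y ∘ (idm Y ⊠ beta) ∘ assoc Y X Y ∘ (alpha ⊠ idm Y) ∘ lunit_inv Y = idm Y /\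
  (forall U V : C,
     (forall f : Hom (X ⊗ U) V, lam_inv beta (lam_map alpha f) = f) /\
     (forall g : Hom U (Y ⊗ V), lam_map alpha (lam_inv beta g) = g)) /\
  (forall (U U' V V' : C) (u : Hom U' U) (v : Hom V V') (f : Hom (X ⊗ U) V),
     lam_map alpha (v ∘ f ∘ (idm X ⊠ u)) = (idm Y ⊠ v) ∘ lam_map alpha f ∘ u) /\
  (forall U V : C,
     (forall f : Hom (U ⊗ Y) V, rho_inv beta (rho_map alpha f) = f) /\
     (forall g : Hom U (V ⊗ X), rho_map alpha (rho_inv beta g) = g)) /\
  (forall (U U' V V' : C) (u : Hom U' U) (v : Hom V V') (f : Hom (U ⊗ Y) V),
     rho_map alpha (v ∘ f ∘ (u ⊠ idm Y)) = (v ⊠ idm X) ∘ rho_map alpha f ∘ u).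
Proof.
  intros F alpha beta.
  pose proof (frobenius_zigzag_X F) as zigX.
  pose proof (frobenius_zigzag_Y F) as zigY.
  split; [exact zigX |]. split; [exact zigY |].
  split; [| split; [| split]].
  - intros U V. split.
    + exact (lam_inv_map alpha beta zigX U V).
    + exact (lam_map_inv alpha beta zigY U V).
  - exact (lam_map_natural alpha).
  - intros U V. split.
    + exact (rho_inv_map alpha beta zigY U V).
    + exact (rho_map_inv alpha beta zigX U V).
  - exact (rho_map_natural alpha).
Qed.
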